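(* (i) For every positive integer $n$, $$s(n):=\frac{2}{n}\sum_{k=1}^n (2k+1)M_k^2\in\mathbb{Z}.$$ (ii) For every prime $p>3$, $$\sum_{k=0}^{p-1}(2k+1)M_k^2\equiv 12p\left(\frac{p}{3}\right)\pmod{p^2}.$$
   Context: For $n\in\mathbb{N}=\{0,1,2,\dots\}$, $M_n$ denotes the Motzkin number $M_n=\sum_{k=0}^{\lfloor n/2\rfloor}\binom{n}{2k}C_k$, where $C_k=\binom{2k}{k}/(k+1)$ is the Catalan number. $\left(\frac{p}{3}\right)$ is the Legendre symbol. *)

From mathcomp Require Import all_boot all_order all_algebra.
Set Implicit Arguments. Unset Strict Implicit. Unset Printing Implicit Defensive.

(* Catalan number C_k = binom(2k,k)/(k+1) (exact division). *)
Definition catalan (k : nat) : nat := 'C(k.*2, k) %/ k.+1.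

Definition motzkin (n : nat) : nat :=
  \sum_(0 <= k < n./2.+1) 'C(n, k.*2) * catalan k.

Definition legendre3 (a : nat) : int :=
  if a %% 3 == 0 then 0%R else if a %% 3 == 1 then 1%R else (-1)%R.

From mathcomp Require Import all_boot all_order all_algebra.
From mathcomp Require Import ring lra zify.
Import GRing.Theory Num.Theory.

Set Implicit Arguments.
Unset Strict Implicit.
Unset Printing Implicit Defensive.

(* (i) Telescoping against a Zeilberger certificate gives the recurrence
   (n+4) M_(n+2) = (2n+5) M_(n+1) + 3(n+1) M_n, and with it the closed form
   4 S_n = 4 + Q(n, M_n, M_(n+1)) for S_n = sum_(k<=n) (2k+1) M_k^2 and an explicit
   quadratic form Q.  With d = 3(n+1) M_n - (n+3) M_(n+1) = n (M_n - 3 M_(n-1)) one has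
   Q = -(4n+5) d^2 - 12(n+1) M_n d, which forces d to be even and then n | 2 (S_n - 1).
   (ii) (n+1) M_n is the coefficient of x^n in T^(n+1), T = 1 + x + x^2.  Let a_j be the
   coefficients of T^p.  Since T'/T = sum_k eps(k+1) x^k, j a_j = p sum_(i<j) a_i eps(j-i);
   hence p | a_j and (a_j / p) j = eps j (mod p) for 0 < j < p, and a_p = 1 (mod p^2) by the
   antisymmetry of eps(j) eps(p-j) / j under j <-> p - j.  This gives
   M_(p-1) = - eps(p-1) (mod p) and M_p = 1 + p mu with 2 mu = -(2 eps(p-1) + eps(p-2) + 2)
   (mod p), and expanding 4 S_(p-1) = 4 + Q(p-1, M_(p-1), M_p) modulo p^2 concludes. *)

Lemma catalan_mulS k : catalan k * k.+1 = 'C(k.*2, k).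
Proof.
rewrite /catalan divnK // -addnn.
apply/dvdnP; exists ('C(k + k, k) - 'C(k + k, k.+1)).
have := mul_bin_left (k + k) k; rewrite addnK mulnBl; nia.
Qed.

Lemma bin_double_catalan k : 'C(k.+1.*2, k.+1) = 2 * k.*2.+1 * catalan k.
Proof.
apply/eqP; rewrite -(eqn_pmul2r (ltn0Sn k)) -mulnA catalan_mulS doubleS binS.
have sym : 'C(k.*2.+1, k) = 'C(k.*2.+1, k.+1).
  rewrite -bin_sub; last by rewrite -addnn; lia.
  by congr 'C(_, _); rewrite -addnn; lia.
have := mul_bin_diag k.*2.+1 k; rewrite /= -sym; nia.
Qed.

Lemma motzkin0 : motzkin 0 = 1.
Proof. by rewrite /motzkin big_nat1. Qed.

Lemma motzkin1 : motzkin 1 = 1.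
Proof. by rewrite /motzkin big_nat1. Qed.

Lemma motzkin_widen n N :
  n./2 < N -> motzkin n = \sum_(0 <= k < N) 'C(n, k.*2) * catalan k.
Proof.
move=> ltnN; rewrite /motzkin [RHS](big_cat_nat _ (n := n./2.+1)) //=.
rewrite [X in _ + X]big_nat_cond [X in _ + X]big1 ?addn0 // => k /andP[/andP[+ _] _].
by rewrite ltn_half_double => /bin_small ->.
Qed.

Section MotzkinRecurrence.
Local Open Scope ring_scope.

Lemma mul_binS_int m k : (k.+1 * 'C(m, k.+1))%N%:Z = (m%:Z - k%:Z) * 'C(m, k)%:Z.
Proof.
have [le_km | lt_mk] := leqP k m; first by rewrite mul_bin_left PoszM -subzn.
by rewrite !bin_small ?mulr0 ?muln0 // ltnW.
Qed.

Lemma bin_motzkin_certificate m i :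
  (m + 4)%N%:Z * 'C(m.+2, i.*2.+2)%:Z - (2 * m + 5)%N%:Z * 'C(m.+1, i.*2.+2)%:Z
    - (3 * (m + 1))%N%:Z * 'C(m, i.*2.+2)%:Z
  = - 4 * (i.*2.+3)%:Z * 'C(m.+1, i.*2.+3)%:Z + (i.*2.+4)%:Z * 'C(m.+1, i.*2.+1)%:Z.
Proof.
have := mul_binS_int m i.*2.+2; have := mul_binS_int m i.*2.
rewrite !binS !PoszD !PoszM.
set c3 := Posz 'C(m, _.+3); set c2 := Posz 'C(m, _.+2).
set c1 := Posz 'C(m, _.+1); set c0 := Posz 'C(m, _).
lia.
Qed.

(* Zeilberger certificate for the three-term recurrence of the Motzkin numbers. *)
Definition motzkin_cert (n k : nat) : int :=
  if k is k'.+1 then - 2 * ('C(n, k'.*2.+1) * 'C(k.*2, k))%N%:Z else 0.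

Lemma motzkin_summand_telescope m k :
  (m + 4)%N%:Z * ('C(m.+2, k.*2) * catalan k)%N%:Z
    - (2 * m + 5)%N%:Z * ('C(m.+1, k.*2) * catalan k)%N%:Z
    - (3 * (m + 1))%N%:Z * ('C(m, k.*2) * catalan k)%N%:Z
  = motzkin_cert m.+1 k.+1 - motzkin_cert m.+1 k.
Proof.
case: k => [|i].
  rewrite /motzkin_cert /catalan /= !bin0 !bin1 divn1 subr0; lia.
rewrite /motzkin_cert bin_double_catalan -catalan_mulS !doubleS.
have := congr1 ( *%R (catalan i.+1)%:Z) (bin_motzkin_certificate m i).
rewrite !PoszM !PoszD; lia.
Qed.

Lemma motzkin_rec m :
  ((m + 4) * motzkin m.+2 = (2 * m + 5) * motzkin m.+1 + 3 * (m + 1) * motzkin m)%N.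
Proof.
apply/eqP; rewrite -eqz_nat PoszD !PoszM -subr_eq0 opprD addrA.
have widen n : (n <= m.+2)%N ->
    motzkin n = \sum_(0 <= k < m.+3) 'C(n, k.*2) * catalan k.
  by move=> le_nm; apply: motzkin_widen; rewrite ltn_half_double -addnn; lia.
rewrite (widen _ (leqnn _)) (widen _ (leqnSn _)) (widen _ (leqW (leqnSn _))).
rewrite !(big_morph Posz PoszD (erefl _)) !big_distrr -!sumrB /=.
under eq_bigr do rewrite -!PoszM motzkin_summand_telescope.
rewrite telescope_sumr // /motzkin_cert subr0 bin_small ?mul0n ?mulr0 //.
by rewrite -addnn; lia.
Qed.

End MotzkinRecurrence.

Local Notation Mz k := (Posz (motzkin k)).

Section MotzkinSquareSum.
Local Open Scope ring_scope.

Lemma motzkinz_rec n :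
  (n%:Z + 4) * Mz n.+2 = (2 * n%:Z + 5) * Mz n.+1 + 3 * (n%:Z + 1) * Mz n.
Proof. by have := congr1 Posz (motzkin_rec n); rewrite !PoszD !PoszM. Qed.

Definition motzkin_form (z x y : int) : int :=
  - 9 * (z + 1) ^+ 2 * (4 * z + 9) * x ^+ 2
  + 6 * (z + 1) * (z + 3) * (4 * z + 7) * x * y
  - (z + 3) ^+ 2 * (4 * z + 5) * y ^+ 2.

Lemma motzkin_form_step z x y w :
    (z + 4) * x = (2 * z + 5) * y + 3 * (z + 1) * w ->
  motzkin_form z w y + 4 * (2 * z + 3) * y ^+ 2 = motzkin_form (z + 1) y x.
Proof.
move=> rec; rewrite /motzkin_form.
have -> : (z + 1 + 3) ^+ 2 * (4 * (z + 1) + 5) * x ^+ 2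
          = (4 * z + 9) * ((z + 4) * x) ^+ 2 by ring.
have -> : 6 * (z + 1 + 1) * (z + 1 + 3) * (4 * (z + 1) + 7) * y * x
          = 6 * (z + 2) * (4 * z + 11) * y * ((z + 4) * x) by ring.
by rewrite rec; ring.
Qed.

Lemma motzkin_sq_sum n :
  4 * \sum_(0 <= k < n.+1) ((2 * k + 1) * motzkin k ^ 2)%N%:Z
  = 4 + motzkin_form n%:Z (Mz n) (Mz n.+1).
Proof.
elim: n => [|n IH]; first by rewrite big_nat1 motzkin0 motzkin1 /motzkin_form.
rewrite big_nat_recr //= mulrDr IH intS [1 + _]addrC.
by rewrite -(motzkin_form_step (motzkinz_rec n)); ring.
Qed.

Lemma motzkin_formE z x y :
  let d := 3 * (z + 1) * x - (z + 3) * y in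
  motzkin_form z x y = - (4 * z + 5) * d ^+ 2 - 4 * (3 * (z + 1) * x) * d.
Proof. by rewrite /motzkin_form; ring. Qed.

Lemma motzkin_defect n :
  3 * (n.+1%:Z + 1) * Mz n.+1 - (n.+1%:Z + 3) * Mz n.+2
  = n.+1%:Z * (Mz n.+1 - 3 * Mz n).
Proof.
have -> : n.+1%:Z + 3 = n%:Z + 4 by rewrite intS; ring.
by rewrite motzkinz_rec intS; ring.
Qed.

Lemma dvdz_double_of_quad (n d c T : int) :
  4 * T = - (4 * n + 5) * d ^+ 2 - 4 * c * d -> (n %| d)%Z -> (n %| 2 * T)%Z.
Proof.
move=> eqT n_d.
have /dvdzP[q d2q] : (2 %| d)%Z.
  have : (2 %| d * d)%Z.
    by apply/dvdzP; exists (- 2 * (T + c * d + (n + 1) * d ^+ 2)); lra.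
  by rewrite !dvdzE abszM Euclid_dvdM // orbb.
have -> : 2 * T = d * (- (4 * n + 5) * q - 2 * c).
  by rewrite d2q in eqT *; lra.
exact: dvdz_mulr.
Qed.

End MotzkinSquareSum.

Lemma motzkin_sq_sum_dvd n :
  0 < n -> n %| 2 * \sum_(1 <= k < n.+1) (2 * k + 1) * motzkin k ^ 2.
Proof.
case: n => // n _.
set T := \sum_(1 <= k < n.+2) _.
have sumT : (4 * T%:Z = motzkin_form n.+1 (Mz n.+1) (Mz n.+2))%R.
  apply: (@addrI _ 4%R).
  rewrite -motzkin_sq_sum big_ltn // motzkin0 /T (big_morph Posz PoszD (erefl : Posz 0 = 0)).
  ring.
rewrite motzkin_formE motzkin_defect in sumT.
apply: (dvdz_double_of_quad sumT); exact: dvdz_mulr.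
Qed.

Definition trinomial : {poly int} := 1 + 'X + 'X^2.

(* [eps j] is the coefficient of [x^(j-1)] in trinomial'/trinomial = (1 + x - 2x^2)/(1 - x^3). *)
Definition eps (j : nat) : int := if j %% 3 == 0 then (-2)%R else 1%R.

Lemma eps_period_sum j : (eps j.+2 + eps j.+1 + eps j = 0)%R.
Proof.
rewrite /eps -[j.+2]addn2 -[j.+1]addn1 -(modnDml j 1) -(modnDml j 2).
by case: (j %% 3) (ltn_pmod j (isT : 0 < 3)) => [|[|[|r]]].
Qed.

Lemma eps_ndvd3 j : ~~ (3 %| j) -> eps j = 1%R.
Proof. by rewrite /eps /dvdn => /negbTE ->. Qed.

Lemma sum_antisym_eq0 (R : idomainType) n (F : nat -> R) :
    (2%:R != 0 :> R)%R -> (forall i, 0 < i < n -> F (n - i) = (- F i)%R) ->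
  (\sum_(1 <= i < n) F i = 0)%R.
Proof.
move=> two_neq0 FN; set S := (\sum_(1 <= i < n) F i)%R.
have /eqP : S = (- S)%R.
  rewrite {1}/S big_nat_rev -sumrN; apply: eq_big_nat => i lt_in.
  by rewrite add1n subSS FN.
by rewrite -addr_eq0 -mulr2n -mulr_natl mulf_eq0 (negbTE two_neq0) => /eqP.
Qed.

Section TrinomialCoefficients.
Local Open Scope ring_scope.

Lemma coef_Xadd1_exp q d : (('X + 1 : {poly int}) ^+ q)`_d = 'C(q, d)%:Z.
Proof.
elim: q d => [|q IH] d; first by rewrite expr0 coef1 bin0n; case: d.
rewrite exprSr mulrDr mulr1 coefD coefMX; case: d => [|d] /=.
  by rewrite add0r IH !bin0.
by rewrite !IH binS PoszD addrC.
Qed.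

Lemma coef0_trinomial_exp n : (trinomial ^+ n)`_0 = 1.
Proof. by rewrite -horner_coef0 horner_exp /trinomial !hornerE expr1n. Qed.

Lemma coef_trinomial_mul q k : (trinomial * q)`_k.+2 = q`_k.+2 + q`_k.+1 + q`_k.
Proof. by rewrite /trinomial !mulrDl mul1r !coefD coefXM coefXnM /= subn2. Qed.

Lemma coef_trinomial_exp n j :
  (trinomial ^+ n)`_j
  = (\sum_(i < n.+1) if j < i.*2 then 0 else 'C(n, i) * 'C(n - i, j - i.*2))%N%:Z.
Proof.
rewrite /trinomial [1 + 'X]addrC exprDn coef_sum (big_morph Posz PoszD (erefl : Posz 0 = 0)).
apply: eq_bigr => i _; rewrite coefMn -exprM coefMXn mul2n.
case: ifP => _; first by rewrite mul0rn.
by rewrite coef_Xadd1_exp -mulr_natr natz -PoszM mulnC.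
Qed.

Lemma bin_trinomial_motzkin n i : (i.*2 <= n)%N ->
  ('C(n.+1, i) * 'C(n.+1 - i, n - i.*2) = n.+1 * ('C(n, i.*2) * catalan i))%N.
Proof.
move=> le2in; have le_in : (i <= n.+1)%N by rewrite -addnn in le2in; lia.
have fact_gt0 : (0 < i`! * ((n - i.*2)`! * i.+1`!))%N by rewrite !muln_gt0 !fact_gt0.
apply/eqP; rewrite -(eqn_pmul2r fact_gt0); apply/eqP.
have e1 := bin_fact le_in.
have e2 : ('C(n.+1 - i, n - i.*2) * ((n - i.*2)`! * i.+1`!) = (n.+1 - i)`!)%N.
  have -> : i.+1 = (n.+1 - i - (n - i.*2))%N by rewrite -addnn in le2in *; lia.
  by apply: bin_fact; rewrite -addnn in le2in *; lia.
have e3 := catalan_mulS i.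
have e4 : ('C(i.*2, i) * (i`! * i`!) = (i.*2)`!)%N.
  by have := @bin_fact i.*2 i; rewrite -addnn addnK leq_addr; apply.
have e5 := bin_fact le2in.
transitivity n.+1`!.
  by rewrite -e1 -e2; lia.
by rewrite factS -e5 -e4 -e3 factS; lia.
Qed.

Lemma coef_trinomial_motzkin n : (trinomial ^+ n.+1)`_n = (n.+1 * motzkin n)%N%:Z.
Proof.
rewrite coef_trinomial_exp; congr Posz.
rewrite -(big_mkord xpredT
  (fun i => if n < i.*2 then 0 else 'C(n.+1, i) * 'C(n.+1 - i, n - i.*2))%N).
rewrite (big_cat_nat _ (n := n./2.+1)) //=; last by rewrite ltnS leq_half_double; lia.
rewrite [X in (_ + X)%N]big_nat_cond [X in (_ + X)%N]big1 ?addn0; last first.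
  by move=> k /andP[/andP[+ _] _]; rewrite ltn_half_double => ->.
rewrite /motzkin big_distrr /=; apply: eq_big_nat => i /andP[_ lt_in2].
have le2in : (i.*2 <= n)%N by rewrite -geq_half_double -ltnS.
by rewrite ltnNge le2in /= bin_trinomial_motzkin.
Qed.

Lemma deriv_trinomial : trinomial^`() = 1 + 'X *+ 2.
Proof. by rewrite /trinomial !derivE add0r. Qed.

Lemma trinomial_mul_dlog N :
  trinomial * \poly_(k < N) eps k.+1
  = trinomial^`() + 'X^N * ((eps N)%:P * 'X - (eps N.+1)%:P).
Proof.
rewrite deriv_trinomial; elim: N => [|N IH].
  by rewrite poly_def big_ord0 /trinomial /eps /=; ring.
rewrite poly_def big_ord_recr /= -(poly_def N (fun k => eps k.+1)) mulrDr IH -mul_polyC.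
have -> : eps N.+2 = - eps N.+1 - eps N by have := eps_period_sum N; lra.
rewrite /trinomial (exprS _ N) polyCB polyCN; move: (_ ^+ N) => XN; ring.
Qed.

Lemma coef_trinomial_exp_rec n m :
  (trinomial ^+ n)`_m.+1 *+ m.+1
  = (\sum_(0 <= j < m.+1) (trinomial ^+ n)`_j * eps (m.+1 - j)) *+ n.
Proof.
rewrite -coef_deriv deriv_exp coefMn; case: n => [|n]; first by rewrite !mulr0n.
congr (_ *+ _); move: (trinomial_mul_dlog m.+1) => /esym/(canRL (addrK _)) ->.
rewrite mulrBl coefB -!mulrA coefXnM ltnSn /= subr0 mulrCA -exprS mulrC coefM big_mkord.
by apply: eq_bigr => j _; rewrite coef_poly ltnS leq_subr -subSn // -ltnS.
Qed.

End TrinomialCoefficients.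

Section TrinomialModPrime.
Local Open Scope ring_scope.

Variable p : nat.
Hypothesis p_pr : prime p.

Local Notation a j := ((trinomial ^+ p)`_j).
Local Notation "x %:Fp" := (x%:~R : 'F_p) (at level 2, format "x %:Fp").

Lemma Fp_nat_neq0 j : (0 < j < p)%N -> j%:R != 0 :> 'F_p.
Proof. by case/andP=> j_gt0 lt_jp; rewrite -(dvdn_pcharf (pchar_Fp p_pr)) gtnNdvd. Qed.

Lemma dvdz_coef_trinomial j : (0 < j < p)%N -> (p %| a j)%Z.
Proof.
case: j => // j lt_jp; rewrite (dvdz_pcharf (pchar_Fp p_pr)).
have := congr1 (fun x : int => x%:Fp) (coef_trinomial_exp_rec p j).
rewrite /= !rmorphMn (mulrn_pchar (pchar_Fp p_pr)) -mulr_natr => /eqP.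
by rewrite mulf_eq0 (negbTE (Fp_nat_neq0 lt_jp)) orbF.
Qed.

Lemma trinomial_dsum_Fp j : (0 < j <= p)%N ->
  (\sum_(0 <= i < j) a i * eps (j - i)%N)%:Fp = (eps j)%:Fp.
Proof.
case/andP=> j_gt0 le_jp; rewrite big_ltn // coef0_trinomial_exp mul1r subn0 rmorphD /=.
rewrite rmorph_sum big1_seq ?addr0 // => i /andP[_]; rewrite mem_index_iota => /andP[i_gt0 lt_ij].
apply/eqP; rewrite rmorphM /= mulf_eq0 -(dvdz_pcharf (pchar_Fp p_pr)).
by rewrite dvdz_coef_trinomial // i_gt0 (leq_trans lt_ij).
Qed.

Lemma coef_trinomial_quot_Fp j : (0 < j < p)%N -> (a j %/ p)%Z%:Fp * j%:R = (eps j)%:Fp.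
Proof.
move=> /[dup] /andP[j_gt0 lt_jp] /dvdz_coef_trinomial /divzK.
set q := (a j %/ p)%Z => a_j.
rewrite -trinomial_dsum_Fp ?j_gt0 ?(ltnW lt_jp) // mulr_natr -rmorphMn; congr intmul.
have := coef_trinomial_exp_rec p j.-1; rewrite prednK // -a_j => rec.
by apply/eqP; rewrite -(eqr_pMn2r (prime_gt0 p_pr)) -rec; apply/eqP; ring.
Qed.

Hypothesis p_gt3 : (3 < p)%N.

Lemma coef_trinomial_p_modsq : (p%:Z ^+ 2 %| a p - 1)%Z.
Proof.
have p_gt0 := prime_gt0 p_pr.
have ndvd3 : ~~ (3 %| p)%N by rewrite dvdn_prime2 // neq_ltn p_gt3.
have := coef_trinomial_exp_rec p p.-1; rewrite prednK // => /eqP.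
rewrite (eqr_pMn2r p_gt0) => /eqP ->.
rewrite big_ltn // coef0_trinomial_exp mul1r subn0 eps_ndvd3 // [1 + _]addrC addrK.
rewrite (eq_big_nat _ _ (F2 := fun i => p%:Z * ((a i %/ p)%Z * eps (p - i)))); last first.
  by move=> i lt_ip; rewrite mulrA [p%:Z * _]mulrC divzK // dvdz_coef_trinomial.
rewrite -mulr_sumr expr2 dvdz_mul2l ?eqz_nat -?lt0n // (dvdz_pcharf (pchar_Fp p_pr)).
rewrite rmorph_sum (eq_big_nat _ _ (F2 := fun i => (eps i)%:Fp * (eps (p - i))%:Fp / i%:R)).
  apply/eqP/sum_antisym_eq0 => [|i lt_ip]; first by apply: Fp_nat_neq0; lia.
  have /andP[_ lt_ip'] := lt_ip.
  rewrite subKn ?natrB ?(ltnW lt_ip') // (pcharf0 (pchar_Fp p_pr)) sub0r invrN mulrN.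
  by rewrite [_ * (eps i)%:~R]mulrC.
move=> i lt_ip /=; rewrite rmorphM /= -(coef_trinomial_quot_Fp lt_ip).
by rewrite mulrAC mulfK // Fp_nat_neq0.
Qed.

Lemma motzkin_pred_Fp : (Mz p.-1)%:Fp = - (eps p.-1)%:Fp.
Proof.
have p_gt0 := prime_gt0 p_pr.
have lt_p1 : (0 < p.-1 < p)%N by lia.
have := coef_trinomial_quot_Fp lt_p1; rewrite -[X in trinomial ^+ X](prednK p_gt0).
rewrite coef_trinomial_motzkin prednK // PoszM mulKz; last by rewrite eqz_nat -lt0n.
rewrite -subn1 natrB // (pcharf0 (pchar_Fp p_pr)) sub0r mulrN1 => <-.
by rewrite opprK.
Qed.

Lemma motzkin_prime_expansion : exists2 mu : int,
  Mz p = 1 + p%:Z * mu & (p %| 2 * mu + 2 * eps p.-1 + eps p.-2 + 2)%Z.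
Proof.
have p_gt0 := prime_gt0 p_pr; have p_pr' := pchar_Fp p_pr.
have Fp_p : (p%:Z)%:Fp = 0 := pcharf0 p_pr'.
have /dvdzP[nu a_p] := coef_trinomial_p_modsq.
have lt_p2 : (0 < p.-2 < p)%N by lia.
have /divzK := dvdz_coef_trinomial lt_p2; set beta := (a p.-2 %/ p)%Z => a_p2.
have a_p1 := coef_trinomial_motzkin p.-1; rewrite prednK // in a_p1.
have := coef_trinomial_mul (trinomial ^+ p) p.-2.
have [-> ->] : p.-2.+2 = p /\ p.-2.+1 = p.-1 by lia.
rewrite -exprS coef_trinomial_motzkin a_p1 -a_p2 -(subrK 1 (a p)) a_p !PoszM => rec.
set mu := beta + Mz p.-1 + p%:Z * nu - Mz p.
have Mp : Mz p = 1 + p%:Z * mu by rewrite /mu; lra.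
have M_Fp : (Mz p)%:Fp = 1 by rewrite Mp intrD intrM Fp_p mul0r addr0.
have := coef_trinomial_quot_Fp lt_p2; rewrite -/beta -subn2 natrB; last by lia.
rewrite (pcharf0 p_pr') sub0r => beta_Fp.
exists mu => //; rewrite /mu (dvdz_pcharf p_pr') !(intrD, intrN, intrM) Fp_p M_Fp.
by rewrite motzkin_pred_Fp -beta_Fp; apply/eqP; ring.
Qed.

End TrinomialModPrime.

Lemma legendre3_eps p : prime p -> (3 < p)%N ->
  (12 * legendre3 p = - 7 * eps p.-1 + eps p.-2 - 3)%R.
Proof.
move=> p_pr p_gt3; have : ~~ (3 %| p)%N by rewrite dvdn_prime2 // neq_ltn p_gt3.
rewrite /legendre3 /eps /dvdn => p_mod3.
have [[-> [-> ->]] | [-> [-> ->]]] :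
    p %% 3 = 1 /\ p.-1 %% 3 = 0 /\ p.-2 %% 3 = 2
  \/ p %% 3 = 2 /\ p.-1 %% 3 = 1 /\ p.-2 %% 3 = 0 by lia.
  by [].
by [].
Qed.

Section FormModSquare.
Local Open Scope ring_scope.

Lemma motzkin_form_modsq (P x mu : int) :
  (P ^+ 2 %| 4 + motzkin_form (P - 1) x (1 + P * mu) - P * (36 * x - 20 - 8 * mu))%Z.
Proof.
apply/dvdzP; exists (- 9 * (4 * P + 5) * x ^+ 2
  + 6 * x * (4 * P + 11 + (P + 2) * (4 * P + 3) * mu)
  - (4 * P + 17 + 2 * (4 * P ^+ 2 + 17 * P + 20) * mu + (P + 2) ^+ 2 * (4 * P + 1) * mu ^+ 2)).
by rewrite /motzkin_form; ring.
Qed.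

Lemma modsq_of_motzkin_form (P x mu l S : int) : coprimez P 2 ->
    4 * S = 4 + motzkin_form (P - 1) x (1 + P * mu) ->
    (P %| 36 * x - 20 - 8 * mu - 48 * l)%Z ->
  (S = 12 * P * l %[mod P ^+ 2])%Z.
Proof.
move=> P_odd S4 P_lin; apply/eqP; rewrite eqz_mod_dvd.
have cop : coprimez (P ^+ 2) 4 := coprimezXl 2 (coprimezXr 2 P_odd).
rewrite -(Gauss_dvdzr _ cop).
have -> : 4 * (S - 12 * P * l)
    = 4 + motzkin_form (P - 1) x (1 + P * mu) - P * (36 * x - 20 - 8 * mu)
      + P * (36 * x - 20 - 8 * mu - 48 * l) by rewrite mulrBr S4; ring.
by rewrite rpredD ?motzkin_form_modsq // expr2 dvdz_mul.
Qed.

End FormModSquare.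

Lemma motzkin_sq_sum_modsq p : prime p -> 3 < p ->
  ((\sum_(0 <= k < p) ((2 * k + 1) * motzkin k ^ 2)%N%:Z)
     = (12 * p)%N%:Z * legendre3 p %[mod (p ^ 2)%N%:Z])%Z.
Proof.
move=> p_pr p_gt3; have p_gt0 := prime_gt0 p_pr.
have [mu Mp mu_p] := motzkin_prime_expansion p_pr p_gt3.
rewrite -mulnn !PoszM -expr2.
apply: (@modsq_of_motzkin_form _ (Mz p.-1) mu).
- rewrite coprimezE /= coprime_sym prime_coprime // dvdn_prime2 //; lia.
- by have := motzkin_sq_sum p.-1; rewrite prednK // predn_int // -Mp.
have l12 := legendre3_eps p_pr p_gt3.
have -> : (36 * Mz p.-1 - 20 - 8 * mu - 48 * legendre3 p
    = 4 * (9 * (Mz p.-1 + eps p.-1) - (2 * mu + 2 * eps p.-1 + eps p.-2 + 2)))%R by lra.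
apply/dvdz_mull/rpredB; last exact: mu_p.
by apply: dvdz_mull; rewrite (dvdz_pcharf (pchar_Fp p_pr)) intrD motzkin_pred_Fp // addNr.
Qed.

Theorem theorem1p1 :
  (forall n : nat, 0 < n ->
     n %| 2 * \sum_(1 <= k < n.+1) (2 * k + 1) * motzkin k ^ 2)
  /\
  (forall p : nat, prime p -> 3 < p ->
     ((\sum_(0 <= k < p) ((2 * k + 1) * motzkin k ^ 2)%N%:Z)
        = (12 * p)%N%:Z * legendre3 p %[mod (p ^ 2)%N%:Z])%Z).
Proof.
split; [exact: motzkin_sq_sum_dvd | exact: motzkin_sq_sum_modsq].
Qed.
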